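(* Let $p>0$, $\lambda>0$, and let $u=u(r)$, $r=|x|$, be a radial solution with $0<u<1$ of \[ \Delta u+\frac{\lambda}{(1-u)^p}=0 \ \text{ in } |x|<1\subset\mathbb{R}^n,\qquad u=0 \text{ on } |x|=1. \] Suppose $u$ is singular, i.e. the problem \[ \omega''+\frac{n-1}{r}\omega'+\lambda\frac{p}{(1-u)^{p+1}}\omega=0\quad(0<r<1),\qquad \omega'(0)=\omega(1)=0 \] has a nontrivial solution. Then \[ \omega(r)=ru'(r)-\frac{2}{p+1}u(r)+\frac{2}{p+1} \] is a solution of this problem. *)

From Stdlib Require Import Reals Lra.
From Coquelicot Require Import Coquelicot.
Open Scope R_scope.

(* In radial form:
     u'' + (n-1)/r u' + lambda/(1-u)^p = 0   (0 < r < 1),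
   u'(0) = 0 (and u' -> 0 as r -> 0+, i.e. u is C^1 at the origin),
   u continuous up to r = 1 with u(1) = 0.  Values of u outside [0,1]
   are irrelevant. *)
Definition radial_solution (n : nat) (p lam : R) (u : R -> R) : Prop :=
  (forall r, 0 <= r < 1 -> 0 < u r < 1) /\
  (forall r, 0 < r < 1 -> ex_derive u r /\ ex_derive (Derive u) r) /\
  (forall r, 0 < r < 1 ->
     Derive_n u 2 r + (INR n - 1) / r * Derive u r
       + lam / Rpower (1 - u r) p = 0) /\
  filterlim (fun h => (u h - u 0) / h) (at_right 0) (locally 0) /\
  filterlim (Derive u) (at_right 0) (locally 0) /\
  filterlim u (at_left 1) (locally 0) /\ u 1 = 0.

Definition lin_solution (n : nat) (p lam : R) (u w : R -> R) : Prop :=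
  (forall r, 0 < r < 1 -> ex_derive w r /\ ex_derive (Derive w) r) /\
  (forall r, 0 < r < 1 ->
     Derive_n w 2 r + (INR n - 1) / r * Derive w r
       + lam * p / Rpower (1 - u r) (p + 1) * w r = 0) /\
  filterlim (fun h => (w h - w 0) / h) (at_right 0) (locally 0) /\
  filterlim w (at_left 1) (locally 0).

Definition nontrivial (w : R -> R) : Prop :=
  exists r, 0 < r < 1 /\ w r <> 0.

From Stdlib Require Import Reals Lra.
From Coquelicot Require Import Coquelicot.
Open Scope R_scope.

(* [omega = r u' + 2/(p+1) (1 - u)] is the generator of the scaling symmetry
   [1 - u(r) |-> mu^(-2/(p+1)) (1 - u(mu r))] of the equation, so it solves the
   linearized equation, and [omega'(0) = 0] because [u'(0) = 0]; only
   [omega(1) = 0] needs the singularity hypothesis.  If [w] is a nontrivial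
   solution of the linearized problem, the weighted Wronskian
   [r^(n-1) (omega w' - omega' w)] is constant on (0,1), and it is 0 because
   [omega] has a limit at 0, [omega' -> 0], and [w'] takes arbitrarily small
   values near 0 (mean value theorem and [w'(0) = 0]).  At a point [r0] with
   [w(r0) <> 0], [omega - (omega(r0)/w(r0)) w] then has zero Cauchy data, so it
   vanishes identically by a Gronwall estimate on [z^2 + z'^2]; hence
   [omega(r) -> 0] as [r -> 1], like [w]. *)

Lemma filterlim_Rplus {T} {F : (T -> Prop) -> Prop} {FF : Filter F} (f g : T -> R) (a b : R) :
  filterlim f F (locally a) -> filterlim g F (locally b) ->
  filterlim (fun x => f x + g x) F (locally (a + b)).
Proof. intros Hf Hg. exact (filterlim_comp_2 f g Rplus Hf Hg (filterlim_plus a b)). Qed.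

Lemma filterlim_Rmult {T} {F : (T -> Prop) -> Prop} {FF : Filter F} (f g : T -> R) (a b : R) :
  filterlim f F (locally a) -> filterlim g F (locally b) ->
  filterlim (fun x => f x * g x) F (locally (a * b)).
Proof. intros Hf Hg. exact (filterlim_comp_2 f g Rmult Hf Hg (filterlim_mult a b)). Qed.

Lemma filterlim_Rminus {T} {F : (T -> Prop) -> Prop} {FF : Filter F} (f g : T -> R) (a b : R) :
  filterlim f F (locally a) -> filterlim g F (locally b) ->
  filterlim (fun x => f x - g x) F (locally (a - b)).
Proof.
  intros Hf Hg. apply filterlim_Rplus; [exact Hf|].
  exact (filterlim_comp _ _ _ g Ropp _ _ _ Hg (filterlim_opp (V := R_NormedModule) b)).
Qed.

Lemma filterlim_Rabs_lt {T} {F : (T -> Prop) -> Prop} {FF : Filter F} (f : T -> R) (l eps : R) :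
  filterlim f F (locally l) -> 0 < eps -> F (fun x => Rabs (f x - l) < eps).
Proof. intros Hf He. exact (proj1 (filterlim_locally f l) Hf (mkposreal eps He)). Qed.

Lemma at_right_0_interval (P : R -> Prop) :
  at_right 0 P -> exists d, 0 < d /\ forall t, 0 < t < d -> P t.
Proof.
  intros [d Hd]. exists d. split; [apply cond_pos|].
  intros t Ht. apply Hd; [|lra].
  change (Rabs (t - 0) < d). rewrite Rminus_0_r, Rabs_pos_eq; lra.
Qed.

Lemma at_right_0_lt (d : R) : 0 < d -> at_right 0 (fun t => 0 < t < d).
Proof.
  intros Hd. exists (mkposreal d Hd). intros t Ht Ht0.
  change (Rabs (t - 0) < d) in Ht. rewrite Rminus_0_r, Rabs_pos_eq in Ht; simpl; lra.
Qed.

Lemma at_left_1_gt : at_left 1 (fun t => 0 < t < 1).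
Proof.
  exists (mkposreal 1 Rlt_0_1). intros t Ht Ht1.
  change (Rabs (t - 1) < 1) in Ht. apply Rabs_lt_between in Ht. lra.
Qed.

Lemma locally_interval (lo hi r : R) : lo < r < hi -> locally r (fun t => lo < t < hi).
Proof. exact (open_and _ _ (open_gt lo) (open_lt hi) r). Qed.

Lemma filterlim_id_at_right_0 : filterlim (fun t => t) (at_right 0) (locally 0).
Proof. apply filterlim_filter_le_1 with (2 := filterlim_id _ _), filter_le_within. Qed.

Lemma right_quotient_continuous (f : R -> R) (l : R) :
  filterlim (fun h => (f h - f 0) / h) (at_right 0) (locally l) ->
  filterlim f (at_right 0) (locally (f 0)).
Proof.
  intros Hq.
  apply filterlim_ext_loc with (fun h => f 0 + h * ((f h - f 0) / h)).
  - apply filter_imp with (2 := at_right_0_lt 1 Rlt_0_1).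
    intros h Hh. field. lra.
  - pose proof (filterlim_Rplus _ _ _ _ (filterlim_const (f 0))
      (filterlim_Rmult _ _ _ _ filterlim_id_at_right_0 Hq)) as Hlim.
    rewrite Rmult_0_l, Rplus_0_r in Hlim. exact Hlim.
Qed.

Lemma mean_value (f df : R -> R) (x y : R) :
  x <= y -> (forall t, x <= t <= y -> is_derive f t (df t)) ->
  exists c, x <= c <= y /\ f y - f x = df c * (y - x).
Proof.
  intros Hxy Hd.
  destruct (MVT_gen f x y df) as [c [Hc E]];
    rewrite ?Rmin_left, ?Rmax_right in * by lra.
  - intros t Ht. apply Hd. lra.
  - intros t Ht. apply continuity_pt_filterlim, (ex_derive_continuous f t).
    exists (df t). apply Hd. lra.
  - exists c. auto.
Qed.

Lemma le_of_derive_nonneg (f df : R -> R) (x y : R) :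
  x <= y -> (forall t, x <= t <= y -> is_derive f t (df t) /\ 0 <= df t) -> f x <= f y.
Proof.
  intros Hxy Hd.
  destruct (mean_value f df x y Hxy) as [c [Hc E]]; [intros t Ht; apply Hd, Ht|].
  pose proof (proj2 (Hd c Hc)). nra.
Qed.

Lemma derive_zero_const (f : R -> R) (lo hi r s : R) :
  (forall t, lo < t < hi -> is_derive f t 0) -> lo < r < hi -> lo < s < hi -> f r = f s.
Proof.
  intros Hd.
  assert (Hle : forall x y, lo < x < hi -> lo < y < hi -> x <= y -> f x = f y).
  { intros x y Hx Hy Hxy.
    destruct (mean_value f (fun _ => 0) x y Hxy) as [c [_ E]]; [intros t Ht; apply Hd; lra|].
    lra. }
  intros Hr Hs. destruct (Rle_or_lt r s).
  - auto.
  - symmetry. apply Hle; auto; lra.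
Qed.

Lemma gronwall_zero (E dE : R -> R) (L x y r0 r : R) :
  (forall t, x <= t <= y -> is_derive E t (dE t) /\ Rabs (dE t) <= L * E t /\ 0 <= E t) ->
  x <= r0 <= y -> x <= r <= y -> E r0 = 0 -> E r = 0.
Proof.
  intros HE Hr0 Hr E0.
  assert (Hd : forall s t, x <= t <= y ->
    is_derive (fun t => E t * exp (s * t)) t ((dE t + s * E t) * exp (s * t))).
  { intros s t Ht. destruct (HE t Ht) as [Dt _].
    auto_derive; [eexists; exact Dt|].
    change (Derive (fun x => E x) t) with (Derive E t).
    rewrite (is_derive_unique _ _ _ Dt). ring. }
  assert (Hexp : forall s, E r * exp (s * r) <= 0 -> E r = 0).
  { intros s Hs. pose proof (exp_pos (s * r)). pose proof (proj2 (proj2 (HE r Hr))). nra. }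
  destruct (Rle_or_lt r0 r) as [Hle | Hlt].
  - assert (H : - (E r0 * exp (- L * r0)) <= - (E r * exp (- L * r))).
    { apply (le_of_derive_nonneg (fun t => - (E t * exp (- L * t)))
               (fun t => - ((dE t + - L * E t) * exp (- L * t))) r0 r Hle).
      intros t Ht. destruct (HE t ltac:(lra)) as [_ [Hb _]]. apply Rabs_le_between in Hb.
      split; [apply (is_derive_opp (fun t => E t * exp (- L * t))), Hd; lra|].
      pose proof (exp_pos (- L * t)). nra. }
    apply (Hexp (- L)). rewrite E0 in H. lra.
  - assert (H : E r * exp (L * r) <= E r0 * exp (L * r0)).
    { apply (le_of_derive_nonneg (fun t => E t * exp (L * t))
               (fun t => (dE t + L * E t) * exp (L * t)) r r0 (Rlt_le _ _ Hlt)).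
      intros t Ht. destruct (HE t ltac:(lra)) as [_ [Hb _]]. apply Rabs_le_between in Hb.
      split; [apply Hd; lra|].
      pose proof (exp_pos (L * t)). nra. }
    apply (Hexp L). rewrite E0 in H. lra.
Qed.

Lemma energy_derivative_bound (z d a b K : R) :
  Rabs a <= K -> Rabs b <= K ->
  Rabs (2 * z * d + 2 * d * (- (a * d) - b * z)) <= (1 + 3 * K) * (z * z + d * d).
Proof.
  intros Ha Hb. apply Rabs_le_between in Ha, Hb.
  pose proof (pow2_ge_0 (z + d)). pose proof (pow2_ge_0 (z - d)).
  assert (0 <= (K - a) * (d * d)) by (apply Rmult_le_pos; nra).
  assert (0 <= (K + a) * (d * d)) by (apply Rmult_le_pos; nra).
  assert (0 <= (K - b) * (z + d) ^ 2) by (apply Rmult_le_pos; lra).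
  assert (0 <= (K + b) * (z - d) ^ 2) by (apply Rmult_le_pos; lra).
  assert (0 <= (K + b) * (z + d) ^ 2) by (apply Rmult_le_pos; lra).
  assert (0 <= (K - b) * (z - d) ^ 2) by (apply Rmult_le_pos; lra).
  assert (0 <= K * (z * z)) by (apply Rmult_le_pos; nra).
  apply Rabs_le. split; nra.
Qed.

Definition ode2_solution (a b : R -> R) (lo hi : R) (y : R -> R) : Prop :=
  forall r, lo < r < hi -> ex_derive y r /\ ex_derive (Derive y) r /\
    Derive (Derive y) r + a r * Derive y r + b r * y r = 0.

Definition wronskian (A B : R -> R) (r : R) : R := A r * Derive B r - Derive A r * B r.

Lemma ode2_zero_of_zero_data (z z1 z2 a b : R -> R) (K x y r0 : R) :
  (forall t, x <= t <= y -> is_derive z t (z1 t) /\ is_derive z1 t (z2 t) /\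
     z2 t + a t * z1 t + b t * z t = 0 /\ Rabs (a t) <= K /\ Rabs (b t) <= K) ->
  x <= r0 <= y -> z r0 = 0 -> z1 r0 = 0 -> forall r, x <= r <= y -> z r = 0.
Proof.
  intros Hz Hr0 Z0 Z1 r Hr.
  assert (E : z r * z r + z1 r * z1 r = 0).
  { apply (gronwall_zero (fun t => z t * z t + z1 t * z1 t)
             (fun t => 2 * z t * z1 t + 2 * z1 t * z2 t) (1 + 3 * K) x y r0 r);
      [|auto|auto|rewrite Z0, Z1; ring].
    intros t Ht. destruct (Hz t Ht) as [D0 [D1 [Eq [Ha Hb]]]]. split; [|split].
    - auto_derive; [repeat split; eexists; eassumption|].
      change (Derive (fun x => z x) t) with (Derive z t).
      change (Derive (fun x => z1 x) t) with (Derive z1 t).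
      rewrite (is_derive_unique _ _ _ D0), (is_derive_unique _ _ _ D1). ring.
    - replace (z2 t) with (- (a t * z1 t) - b t * z t) by lra.
      apply energy_derivative_bound; assumption.
    - nra. }
  nra.
Qed.

Lemma bounded_on_segment (f : R -> R) (x y : R) :
  x <= y -> (forall t, x <= t <= y -> continuous f t) ->
  exists K, forall t, x <= t <= y -> Rabs (f t) <= K.
Proof.
  intros Hxy Hc.
  destruct (continuity_ab_maj (fun t => Rabs (f t)) x y Hxy) as [M [HM _]].
  - intros t Ht. apply continuity_pt_filterlim, continuous_Rabs_comp, Hc, Ht.
  - exists (Rabs (f M)). exact HM.
Qed.

Lemma ode2_proportional_of_wronskian_zero (a b A B : R -> R) (lo hi r0 : R) :
  (forall t, lo < t < hi -> continuous a t /\ continuous b t) ->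
  ode2_solution a b lo hi A -> ode2_solution a b lo hi B ->
  lo < r0 < hi -> B r0 <> 0 -> wronskian A B r0 = 0 ->
  forall r, lo < r < hi -> A r = A r0 / B r0 * B r.
Proof.
  intros Hab HA HB Hr0 HB0 HW r Hr.
  set (k := A r0 / B r0). set (x := Rmin r r0). set (y := Rmax r r0).
  assert (Hx : lo < x) by (apply Rmin_glb_lt; lra).
  assert (Hy : y < hi) by (apply Rmax_lub_lt; lra).
  assert (Hr0' : x <= r0 <= y) by (split; [apply Rmin_r | apply Rmax_r]).
  assert (Hr' : x <= r <= y) by (split; [apply Rmin_l | apply Rmax_l]).
  destruct (bounded_on_segment a x y) as [Ka HKa]; [lra | intros t Ht; apply Hab; lra |].
  destruct (bounded_on_segment b x y) as [Kb HKb]; [lra | intros t Ht; apply Hab; lra |].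
  enough (Z : A r - k * B r = 0) by lra.
  apply (ode2_zero_of_zero_data (fun t => A t - k * B t)
           (fun t => Derive A t - k * Derive B t)
           (fun t => Derive (Derive A) t - k * Derive (Derive B) t)
           a b (Rmax Ka Kb) x y r0); [| exact Hr0' | | | exact Hr'].
  - intros t Ht.
    destruct (HA t ltac:(lra)) as [A1 [A2 A3]], (HB t ltac:(lra)) as [B1 [B2 B3]].
    split; [|split; [|split; [|split]]].
    + apply (is_derive_minus A (fun t => k * B t)); apply Derive_correct in A1, B1;
        [exact A1 | apply is_derive_scal, B1].
    + apply (is_derive_minus (Derive A) (fun t => k * Derive B t)); apply Derive_correct in A2, B2;
        [exact A2 | apply is_derive_scal, B2].
    + transitivity ((Derive (Derive A) t + a t * Derive A t + b t * A t)
                     - k * (Derive (Derive B) t + a t * Derive B t + b t * B t)); [ring|].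
      rewrite A3, B3. ring.
    + eapply Rle_trans; [apply HKa, Ht | apply Rmax_l].
    + eapply Rle_trans; [apply HKb, Ht | apply Rmax_r].
  - unfold k. field. exact HB0.
  - unfold wronskian in HW. unfold k. field_simplify; [|exact HB0].
    replace (Derive A r0 * B r0 - A r0 * Derive B r0)
      with (- (A r0 * Derive B r0 - Derive A r0 * B r0)) by ring.
    rewrite HW. field. exact HB0.
Qed.

Lemma radial_wronskian_const (c : R) (b A B : R -> R) (hi r s : R) :
  ode2_solution (fun t => c / t) b 0 hi A -> ode2_solution (fun t => c / t) b 0 hi B ->
  0 < r < hi -> 0 < s < hi ->
  Rpower r c * wronskian A B r = Rpower s c * wronskian A B s.
Proof.
  intros HA HB.
  apply (derive_zero_const (fun t => Rpower t c * wronskian A B t) 0 hi). intros t Ht.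
  destruct (HA t Ht) as [A1 [A2 A3]], (HB t Ht) as [B1 [B2 B3]].
  unfold wronskian, Rpower. auto_derive; [repeat split; auto; lra|].
  change (Derive (fun x => A x) t) with (Derive A t).
  change (Derive (fun x => B x) t) with (Derive B t).
  change (Derive (fun x => Derive A x) t) with (Derive (Derive A) t).
  change (Derive (fun x => Derive B x) t) with (Derive (Derive B) t).
  replace (Derive (Derive A) t) with (- (c / t * Derive A t) - b t * A t) by lra.
  replace (Derive (Derive B) t) with (- (c / t * Derive B t) - b t * B t) by lra.
  field. lra.
Qed.

Lemma derive_small_near_0 (B : R -> R) (hi : R) :
  0 < hi ->
  filterlim (fun h => (B h - B 0) / h) (at_right 0) (locally 0) ->
  (forall t, 0 < t < hi -> ex_derive B t) ->
  forall eps d, 0 < eps -> 0 < d -> exists t, 0 < t < d /\ Rabs (Derive B t) <= eps.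
Proof.
  intros Hhi Hq HB eps d He Hd.
  set (q := fun h => (B h - B 0) / h) in Hq.
  destruct (at_right_0_interval _ (filterlim_Rabs_lt _ 0 (eps / 3) Hq ltac:(lra)))
    as [d1 [Hd1 Hsmall]].
  assert (Hh : exists h, 0 < h /\ h < d /\ h < d1 /\ h < hi).
  { exists (Rmin (Rmin d d1) hi / 2). pose proof (Rmin_l (Rmin d d1) hi).
    pose proof (Rmin_r (Rmin d d1) hi). pose proof (Rmin_l d d1). pose proof (Rmin_r d d1).
    assert (0 < Rmin (Rmin d d1) hi) by (repeat apply Rmin_pos; lra).
    lra. }
  destruct Hh as [h [Hh0 [Hhd [Hhd1 Hhhi]]]].
  destruct (mean_value B (Derive B) (h / 2) h) as [t [Ht E]]; [lra | |].
  { intros t Ht. apply Derive_correct, HB. lra. }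
  exists t. split; [lra|].
  (* the mean value of B' on [h/2, h] is a combination of two difference quotients at 0 *)
  replace (Derive B t) with (2 * q h - q (h / 2)).
  2:{ apply Rmult_eq_reg_r with (h - h / 2); [|lra].
      rewrite <- E. unfold q. field. lra. }
  pose proof (Hsmall h ltac:(lra)). pose proof (Hsmall (h / 2) ltac:(lra)).
  rewrite Rminus_0_r in *. apply Rabs_lt_between in H, H0. apply Rabs_le. lra.
Qed.


Lemma wronskian_small_near_0 (a0 : R) (A B : R -> R) (hi : R) :
  0 < hi ->
  filterlim A (at_right 0) (locally a0) ->
  filterlim (Derive A) (at_right 0) (locally 0) ->
  filterlim (fun h => (B h - B 0) / h) (at_right 0) (locally 0) ->
  (forall t, 0 < t < hi -> ex_derive B t) ->
  forall eps d, 0 < eps -> 0 < d -> exists t, 0 < t < d /\ Rabs (wronskian A B t) <= eps.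
Proof.
  intros Hhi HA HdA HqB HB eps d He Hd.
  set (M := Rabs a0 + Rabs (B 0) + 2).
  assert (HM : 0 < M) by (unfold M; pose proof (Rabs_pos a0); pose proof (Rabs_pos (B 0)); lra).
  assert (He' : 0 < eps / M) by (apply Rdiv_lt_0_compat; lra).
  destruct (at_right_0_interval _
    (filter_and _ _ (filterlim_Rabs_lt _ _ 1 HA Rlt_0_1)
      (filter_and _ _ (filterlim_Rabs_lt _ _ _ HdA He')
         (filterlim_Rabs_lt _ _ 1 (right_quotient_continuous B 0 HqB) Rlt_0_1))))
    as [d0 [Hd0 Hnear]].
  destruct (derive_small_near_0 B hi Hhi HqB HB (eps / M) (Rmin d d0) He')
    as [t [Ht HdB]]; [apply Rmin_pos; lra|].
  pose proof (Rmin_l d d0). pose proof (Rmin_r d d0).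
  exists t. split; [lra|].
  destruct (Hnear t ltac:(lra)) as [HAt [HdAt HBt]].
  rewrite Rminus_0_r in HdAt.
  assert (HAt' : Rabs (A t) <= Rabs a0 + 1).
  { replace (A t) with (a0 + (A t - a0)) by ring.
    eapply Rle_trans; [apply Rabs_triang | lra]. }
  assert (HBt' : Rabs (B t) <= Rabs (B 0) + 1).
  { replace (B t) with (B 0 + (B t - B 0)) by ring.
    eapply Rle_trans; [apply Rabs_triang | lra]. }
  replace eps with ((Rabs a0 + 1) * (eps / M) + eps / M * (Rabs (B 0) + 1))
    by (unfold M in *; field; lra).
  unfold wronskian. eapply Rle_trans; [apply Rabs_triang|]. rewrite Rabs_Ropp, !Rabs_mult.
  apply Rplus_le_compat; apply Rmult_le_compat; try apply Rabs_pos; lra.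
Qed.

Lemma Rpower_le_1 (t c : R) : 0 < t <= 1 -> 0 <= c -> Rpower t c <= 1.
Proof.
  intros Ht Hc. apply Rle_trans with (Rpower 1 c); [apply Rle_Rpower_l; lra|].
  unfold Rpower. rewrite ln_1, Rmult_0_r, exp_0. lra.
Qed.

Lemma radial_wronskian_vanishes (c a0 C : R) (A B : R -> R) (hi : R) :
  0 <= c -> 0 < hi ->
  filterlim A (at_right 0) (locally a0) ->
  filterlim (Derive A) (at_right 0) (locally 0) ->
  filterlim (fun h => (B h - B 0) / h) (at_right 0) (locally 0) ->
  (forall t, 0 < t < hi -> ex_derive B t) ->
  (forall t, 0 < t < hi -> Rpower t c * wronskian A B t = C) -> C = 0.
Proof.
  intros Hc Hhi HA HdA HqB HB HC.
  apply Rabs_eq_0, Rle_antisym; [|apply Rabs_pos].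
  apply Rle_plus_epsilon. intros eps He. rewrite Rplus_0_l.
  destruct (wronskian_small_near_0 a0 A B hi Hhi HA HdA HqB HB eps (Rmin hi 1) He)
    as [t [Ht HW]]; [apply Rmin_pos; lra|].
  pose proof (Rmin_l hi 1). pose proof (Rmin_r hi 1).
  assert (Hpow : 0 < Rpower t c <= 1) by (split; [apply exp_pos | apply Rpower_le_1; lra]).
  rewrite <- (HC t ltac:(lra)), Rabs_mult, (Rabs_pos_eq (Rpower t c)) by lra.
  pose proof (Rabs_pos (wronskian A B t)). nra.
Qed.

Lemma radial_wronskian_zero (c a0 : R) (b A B : R -> R) (hi r : R) :
  0 <= c ->
  ode2_solution (fun t => c / t) b 0 hi A -> ode2_solution (fun t => c / t) b 0 hi B ->
  filterlim A (at_right 0) (locally a0) ->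
  filterlim (Derive A) (at_right 0) (locally 0) ->
  filterlim (fun h => (B h - B 0) / h) (at_right 0) (locally 0) ->
  0 < r < hi -> wronskian A B r = 0.
Proof.
  intros Hc HA HB HA0 HdA0 HB0 Hr.
  assert (HC : Rpower r c * wronskian A B r = 0).
  { apply (radial_wronskian_vanishes c a0 _ A B hi); auto; [lra | |].
    - intros t Ht. apply HB, Ht.
    - intros t Ht. apply (radial_wronskian_const c b A B hi); assumption. }
  apply Rmult_integral in HC as [HC | HC]; [|exact HC].
  exfalso. pose proof (exp_pos (c * ln r)). unfold Rpower in HC. lra.
Qed.

Definition source (p s : R) : R := / Rpower (1 - s) p.

Definition omega (p : R) (u : R -> R) (r : R) : R :=
  r * Derive u r - 2 / (p + 1) * u r + 2 / (p + 1).

Definition lin_coef (p lam : R) (u : R -> R) (r : R) : R :=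
  lam * p / Rpower (1 - u r) (p + 1).

Lemma lin_solutionE (n : nat) (p lam : R) (u w : R -> R) :
  lin_solution n p lam u w <->
  ode2_solution (fun r => (INR n - 1) / r) (lin_coef p lam u) 0 1 w /\
  filterlim (fun h => (w h - w 0) / h) (at_right 0) (locally 0) /\
  filterlim w (at_left 1) (locally 0).
Proof.
  unfold lin_solution, ode2_solution, lin_coef. split.
  - intros [H1 [H2 H3]]. split; [|exact H3].
    intros r Hr. destruct (H1 r Hr). split; [|split]; auto. exact (H2 r Hr).
  - intros [H1 H2]. split; [|split; [|exact H2]]; intros r Hr; apply H1 in Hr as [? [? ?]].
    + split; assumption.
    + assumption.
Qed.

Lemma is_derive_source (q s : R) :
  s < 1 -> is_derive (source q) s (q * source q s / (1 - s)).
Proof.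
  intros Hs. unfold source, Rpower.
  apply is_derive_ext with (fun t => exp (- q * ln (1 - t))).
  { intros t. rewrite <- exp_Ropp. f_equal. ring. }
  auto_derive; [lra|].
  replace (- q * ln (1 + - s)) with (- (q * ln (1 - s))) by (unfold Rminus; ring).
  rewrite exp_Ropp. field. split; [apply Rgt_not_eq, exp_pos | lra].
Qed.

Section Omega.

Variables (n : nat) (p lam : R) (u : R -> R).
Hypotheses (hp : 0 < p) (hu : radial_solution n p lam u).

Lemma radial_u_lt_1 (r : R) : 0 <= r < 1 -> u r < 1.
Proof. intros Hr. apply (proj1 hu r Hr). Qed.

Lemma radial_u_ex_derive (r : R) : 0 < r < 1 -> ex_derive u r /\ ex_derive (Derive u) r.
Proof. apply (proj1 (proj2 hu)). Qed.

Lemma radial_u_second_derive (r : R) : 0 < r < 1 ->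
  Derive (Derive u) r = - ((INR n - 1) / r * Derive u r) - lam * source p (u r).
Proof.
  intros Hr. pose proof (proj1 (proj2 (proj2 hu)) r Hr) as E.
  change (Derive_n u 2 r) with (Derive (Derive u) r) in E. unfold source. unfold Rdiv in E. lra.
Qed.

Lemma lin_coef_continuous (r : R) : 0 < r < 1 -> continuous (lin_coef p lam u) r.
Proof.
  intros Hr. apply (ex_derive_continuous (lin_coef p lam u)).
  change (ex_derive (fun t => lam * p * source (p + 1) (u t)) r).
  pose proof (is_derive_source (p + 1) (u r) (radial_u_lt_1 r ltac:(lra))).
  auto_derive. repeat split; [eexists; eassumption | apply radial_u_ex_derive, Hr].
Qed.

Lemma omega_is_derive (r : R) : 0 < r < 1 ->
  is_derive (omega p u) r
    ((1 - 2 / (p + 1) - (INR n - 1)) * Derive u r - lam * (r * source p (u r))).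
Proof.
  intros Hr. destruct (radial_u_ex_derive r Hr) as [D1 D2].
  unfold omega. auto_derive; [repeat split; assumption|].
  change (Derive (fun x => u x) r) with (Derive u r).
  change (Derive (fun x => Derive u x) r) with (Derive (Derive u) r).
  rewrite (radial_u_second_derive r Hr). field. lra.
Qed.

Lemma omega_ode2 : ode2_solution (fun r => (INR n - 1) / r) (lin_coef p lam u) 0 1 (omega p u).
Proof.
  intros r Hr. destruct (radial_u_ex_derive r Hr) as [D1 D2].
  assert (Hu1 : u r < 1) by (apply radial_u_lt_1; lra).
  pose proof (is_derive_source p (u r) Hu1) as Ds.
  assert (DD : is_derive (Derive (omega p u)) r
    ((1 - 2 / (p + 1) - (INR n - 1)) * Derive (Derive u) r
     - lam * (source p (u r) + r * (p * source p (u r) / (1 - u r) * Derive u r)))).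
  { apply is_derive_ext_loc with
      (fun t => (1 - 2 / (p + 1) - (INR n - 1)) * Derive u t - lam * (t * source p (u t))).
    { apply filter_imp with (2 := locally_interval 0 1 r Hr).
      intros t Ht. symmetry. apply is_derive_unique, omega_is_derive, Ht. }
    auto_derive; [repeat split; try assumption; eexists; eassumption|].
    change (Derive (fun x => Derive u x) r) with (Derive (Derive u) r).
    change (Derive (fun x => u x) r) with (Derive u r).
    change (Derive (fun x => source p x) (u r)) with (Derive (source p) (u r)).
    rewrite (is_derive_unique _ _ _ Ds). ring. }
  split; [eexists; apply omega_is_derive, Hr|].
  split; [eexists; exact DD|].
  rewrite (is_derive_unique _ _ _ DD), (is_derive_unique _ _ _ (omega_is_derive r Hr)).
  rewrite (radial_u_second_derive r Hr).
  unfold lin_coef, omega, source. rewrite Rpower_plus, Rpower_1 by lra.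
  assert (0 < Rpower (1 - u r) p) by apply exp_pos.
  (* the terms without derivatives of [u] cancel because [(p + 1) * (2 / (p + 1)) = 2] *)
  field. lra.
Qed.

Lemma radial_u_continuous_0 : filterlim u (at_right 0) (locally (u 0)).
Proof. apply (right_quotient_continuous u 0), hu. Qed.

Lemma omega_right_derive_0 :
  filterlim (fun h => (omega p u h - omega p u 0) / h) (at_right 0) (locally 0).
Proof.
  destruct hu as [_ [_ [_ [Hq [Hd _]]]]].
  apply filterlim_ext_loc with (fun h => Derive u h - 2 / (p + 1) * ((u h - u 0) / h)).
  - apply filter_imp with (2 := at_right_0_lt 1 Rlt_0_1).
    intros h Hh. unfold omega. field. lra.
  - pose proof (filterlim_Rminus _ _ _ _ Hd
      (filterlim_Rmult _ _ _ _ (filterlim_const (2 / (p + 1))) Hq)) as H.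
    rewrite Rmult_0_r, Rminus_0_r in H. exact H.
Qed.

Lemma omega_lim_0 :
  filterlim (omega p u) (at_right 0) (locally (2 / (p + 1) * (1 - u 0))).
Proof.
  destruct hu as [_ [_ [_ [_ [Hd _]]]]].
  pose proof (filterlim_Rplus _ _ _ _
    (filterlim_Rminus _ _ _ _ (filterlim_Rmult _ _ _ _ filterlim_id_at_right_0 Hd)
       (filterlim_Rmult _ _ _ _ (filterlim_const (2 / (p + 1))) radial_u_continuous_0))
    (filterlim_const (2 / (p + 1)))) as H.
  replace (0 * 0 - 2 / (p + 1) * u 0 + 2 / (p + 1)) with (2 / (p + 1) * (1 - u 0)) in H by ring.
  exact H.
Qed.

Lemma omega_derive_lim_0 : filterlim (Derive (omega p u)) (at_right 0) (locally 0).
Proof.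
  destruct hu as [_ [_ [_ [_ [Hd _]]]]].
  set (c1 := 1 - 2 / (p + 1) - (INR n - 1)).
  apply filterlim_ext_loc with (fun t => c1 * Derive u t - lam * (t * source p (u t))).
  { apply filter_imp with (2 := at_right_0_lt 1 Rlt_0_1).
    intros t Ht. symmetry. apply is_derive_unique, omega_is_derive, Ht. }
  assert (Hs : filterlim (fun t => source p (u t)) (at_right 0) (locally (source p (u 0)))).
  { apply (filterlim_comp _ _ _ u (source p) _ _ _ radial_u_continuous_0).
    apply (ex_derive_continuous (source p)).
    eexists. apply is_derive_source, radial_u_lt_1. lra. }
  pose proof (filterlim_Rminus _ _ _ _ (filterlim_Rmult _ _ _ _ (filterlim_const c1) Hd)
    (filterlim_Rmult _ _ _ _ (filterlim_const lam)
       (filterlim_Rmult _ _ _ _ filterlim_id_at_right_0 Hs))) as H.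
  replace (c1 * 0 - lam * (0 * source p (u 0))) with 0 in H by ring.
  exact H.
Qed.

End Omega.

Theorem lemma5p2 (n : nat) (p lam : R) (u : R -> R)
  (hn : (1 <= n)%nat) (hp : 0 < p) (hlam : 0 < lam)
  (hu : radial_solution n p lam u)
  (hsing : exists w : R -> R, lin_solution n p lam u w /\ nontrivial w) :
  lin_solution n p lam u
    (fun r => r * Derive u r - 2 / (p + 1) * u r + 2 / (p + 1)).
Proof.
  change (lin_solution n p lam u (omega p u)).
  destruct hsing as [w [Hw [r0 [Hr0 Hwr0]]]].
  apply lin_solutionE in Hw as [Hw_ode [Hw_0 Hw_1]].
  pose proof (omega_ode2 n p lam u hp hu) as Hom.
  assert (Hc : 0 <= INR n - 1) by (apply le_INR in hn; simpl in hn; lra).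
  assert (HW : wronskian (omega p u) w r0 = 0).
  { exact (radial_wronskian_zero _ _ _ _ _ 1 r0 Hc Hom Hw_ode
             (omega_lim_0 n p lam u hu) (omega_derive_lim_0 n p lam u hp hu) Hw_0 Hr0). }
  assert (Hprop : forall r, 0 < r < 1 -> omega p u r = omega p u r0 / w r0 * w r).
  { apply (ode2_proportional_of_wronskian_zero (fun r => (INR n - 1) / r) (lin_coef p lam u));
      try assumption.
    intros t Ht. split.
    - apply (ex_derive_continuous (fun t => (INR n - 1) / t)). auto_derive. lra.
    - apply lin_coef_continuous with n; assumption. }
  apply lin_solutionE. split; [exact Hom|]. split; [exact (omega_right_derive_0 n p lam u hp hu)|].
  apply filterlim_ext_loc with (fun r => omega p u r0 / w r0 * w r).
  - apply filter_imp with (2 := at_left_1_gt). intros r Hr. symmetry. apply Hprop, Hr.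
  - rewrite <- (Rmult_0_r (omega p u r0 / w r0)).
    apply filterlim_Rmult; [apply filterlim_const | exact Hw_1].
Qed.
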